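(* Let $S_1=\mathrm{diag}(1,-1,-1)$, $S_2=\mathrm{diag}(-1,1,-1)$, $S_3=\mathrm{diag}(-1,-1,1)$, and let $G$ be a finite group of $3\times 3$ unitary matrices containing $S_1,S_2,S_3$ and a matrix $T$. Let $c$ be one of the numbers $1/2$, $(\sqrt5+1)/4$, $(\sqrt5-1)/4$. Then: (i) for every $j\in\{1,2,3\}$, if $|T_{jj}|=c$ then $T_{jj}=c\,\xi$ for some root of unity $\xi$; (ii) for all $k\neq l$ in $\{1,2,3\}$, if $|T_{kl}T_{lk}|=\tfrac14$ then $T_{kl}T_{lk}=\xi'/4$ for some root of unity $\xi'$.
   Context: In the paper $T$ is an element of the residual charged-lepton symmetry group $G_\ell$, a subgroup of the finite flavour group $G$, and $G$ contains the Klein four-group $\{\mathbbm 1,S_1,S_2,S_3\}$. *)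

From HB Require Import structures.
From mathcomp Require Import all_boot all_order all_algebra.
From mathcomp Require Import complex.
From mathcomp Require Import reals.
Set Implicit Arguments. Unset Strict Implicit. Unset Printing Implicit Defensive.
Import Order.TTheory GRing.Theory Num.Theory.
Local Open Scope ring_scope.

Definition adjmx (R : realType) (A : 'M[R[i]]_3) : 'M[R[i]]_3 :=
  (map_mx Num.conj A)^T.

Definition unitary_mx (R : realType) (A : 'M[R[i]]_3) : Prop :=
  A *m adjmx A = 1%:M.

Definition finite_unitary_group (R : realType) (G : seq 'M[R[i]]_3) : Prop :=
  [/\ (1%:M : 'M[R[i]]_3) \in G,
      (forall A B, A \in G -> B \in G -> A *m B \in G),
      (forall A, A \in G -> invmx A \in G) &
      (forall A, A \in G -> unitary_mx A)].

Definition is_root_of_unity (R : realType) (z : R[i]) : Prop :=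
  exists n : nat, (0 < n)%N /\ z ^+ n = 1.

Definition S1 (R : realType) : 'M[R[i]]_3 :=
  \matrix_(i, j) (if i == j then (if i == 0 :> 'I_3 then 1 else -1) else 0).
Definition S2 (R : realType) : 'M[R[i]]_3 :=
  \matrix_(i, j) (if i == j then (if i == 1 :> 'I_3 then 1 else -1) else 0).
Definition S3 (R : realType) : 'M[R[i]]_3 :=
  \matrix_(i, j) (if i == j then (if i == 2 :> 'I_3 then 1 else -1) else 0).

Definition admissible_c (R : realType) (c : R[i]) : Prop :=
  c = 2^-1 \/ c = ((Num.sqrt (5 : R))%:C%C + 1) / 4
           \/ c = ((Num.sqrt (5 : R))%:C%C - 1) / 4.

From HB Require Import structures.
From mathcomp Require Import all_boot all_order all_algebra all_field.
From mathcomp Require Import complex reals.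
From mathcomp Require Import ring zify.
Import Order.TTheory GRing.Theory Num.Theory.
Local Open Scope ring_scope.
Set Implicit Arguments. Unset Strict Implicit.

(* Every element of G has finite order, so its trace is a sum of roots of unity; for a
   primitive root w of order 5n, with n an exponent of G, all traces lie in Z[w], and so
   does (sqrt 5 - 1)/2.  As S_j = 2 e_jj - 1, both 2 T_jj and 4 T_kl T_lk are sums of
   traces of elements of G, and T_jj / c = 2 T_jj x with x in Z[w].  An element P(w) of
   Z[w] of modulus 1 is a root of unity (Kronecker): since Phi_M is irreducible over Q and
   conjugation acts on its roots as inversion, every conjugate P(z) has modulus 1 too;
   hence the residues of P^m modulo Phi_M have bounded integer coefficients, and the
   powers of P(w) repeat. *)

Lemma fin_image_collision (T : finType) (f : nat -> T) :
  exists i j, (i < j)%N /\ f i = f j.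
Proof.
pose g (i : 'I_#|T|.+1) := f i.
have /injectivePn[i [j neq_ij eq_ij]] : ~~ injectiveb g.
  by apply/negP=> /injectiveP/leq_card; rewrite card_ord ltnn.
case: (ltngtP i j) => [lt_ij|lt_ji|/val_inj eq_ij']; first by exists i, j.
  by exists j, i.
by rewrite eq_ij' eqxx in neq_ij.
Qed.

Lemma unit_expr_period (R : unitRingType) (x : R) (s : seq R) :
  x \is a GRing.unit -> (forall k, x ^+ k \in s) ->
  exists n, (0 < n)%N /\ x ^+ n = 1.
Proof.
move=> ux xs.
have [i [j [lt_ij eq_ij]]] :=
  fin_image_collision (fun k => (inord (index (x ^+ k) s) : 'I_(size s).+1)).
have /(congr1 (nth 0 s)) : index (x ^+ i) s = index (x ^+ j) s.
  by move/(congr1 val): eq_ij; rewrite /= !inordK // ltnS index_size.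
rewrite !nth_index // => eq_xij.
exists (j - i)%N; split; first by rewrite subn_gt0.
apply: (mulrI (unitrX i ux)).
by rewrite -exprD subnKC ?(ltnW lt_ij) // mulr1 eq_xij.
Qed.

Section FiniteUnitaryGroup.
Variables (R : realType) (G : seq 'M[R[i]]_3).
Hypothesis fG : finite_unitary_group G.

Lemma finite_unitary_group_mul A B : A \in G -> B \in G -> A *m B \in G.
Proof. by case: fG => _ mulG _ _ /mulG; apply. Qed.

Lemma finite_unitary_group_order X : X \in G ->
  exists n, (0 < n)%N /\ X ^+ n = 1.
Proof.
move=> XG; case: fG => G1 _ _ unitaryG; apply: (unit_expr_period (s := G)).
  by have [] := mulmx1_unit (unitaryG X XG).
elim=> [|k IHk]; first by rewrite expr0.
by rewrite exprS -mulmxE finite_unitary_group_mul.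
Qed.

Lemma finite_unitary_group_exponent :
  exists n, (0 < n)%N /\ {in G, forall X, X ^+ n = 1}.
Proof.
suff: forall s : seq 'M[R[i]]_3, {subset s <= G} ->
    exists n, (0 < n)%N /\ {in s, forall X, X ^+ n = 1} by apply.
elim=> [|X s IHs] sG; first by exists 1%N.
have [nX [nX_gt0 XnX]] := finite_unitary_group_order (sG X (mem_head _ _)).
have [ns [ns_gt0 sns]] := IHs (fun Y Ys => sG Y (mem_behead (s := X :: s) Ys)).
exists (nX * ns)%N; split; first by rewrite muln_gt0 nX_gt0.
move=> Y; rewrite inE => /predU1P[-> | Ys]; first by rewrite exprM XnX expr1n.
by rewrite mulnC exprM sns ?expr1n.
Qed.

End FiniteUnitaryGroup.

Lemma eigenvalue_unity_root (F : fieldType) m (X : 'M[F]_m.+1) n a :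
  X ^+ n = 1 -> eigenvalue X a -> a ^+ n = 1.
Proof.
move=> Xn /eigenvalueP[v Xv nz_v].
have vXk k : v *m X ^+ k = a ^+ k *: v.
  elim: k => [|k IHk]; first by rewrite expr0 scale1r mulmx1.
  by rewrite exprS -mulmxE mulmxA Xv -scalemxAl IHk scalerA -exprS.
apply/eqP; move: (vXk n); rewrite Xn mulmx1 => /eqP.
rewrite -subr_eq0 -{1}[v]scale1r -scalerBl scaler_eq0 (negbTE nz_v) orbF.
by rewrite subr_eq0 eq_sym.
Qed.

Lemma trace_unity_roots (F : closedFieldType) m (X : 'M[F]_m.+1) n :
  X ^+ n = 1 ->
  exists2 rs : seq F, {in rs, forall z, z ^+ n = 1} & \tr X = \sum_(z <- rs) z.
Proof.
move=> Xn; have [rs Drs] := closed_field_poly_normal (char_poly X).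
rewrite (monicP (char_poly_monic X)) scale1r in Drs.
exists rs => [z rs_z|].
  apply: eigenvalue_unity_root Xn _.
  by rewrite eigenvalue_root_char Drs root_prod_XsubC.
have size_rs : size rs = m.+1.
  by have := size_char_poly X; rewrite Drs size_prod_XsubC => -[].
apply: oppr_inj; rewrite -char_poly_trace // Drs -coefPn_prod_XsubC ?size_rs //.
Qed.

Lemma map_poly_ratr_int (F : numFieldType) (P : {poly int}) :
  map_poly ratr (map_poly (intr : int -> rat) P) = map_poly (intr : int -> F) P.
Proof. by rewrite -map_poly_comp; apply: eq_map_poly => a /=; rewrite ratr_int. Qed.

Lemma Cyclotomic_dvd_Xn_sub1 d : (0 < d)%N ->
  exists q : {poly int}, 'X^d - 1 = 'Phi_d * q.
Proof.
move=> d_gt0; rewrite -(prod_Cyclotomic d_gt0) (big_rem d) /=; first by eexists.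
exact: divisors_id.
Qed.

Section Cyclotomic.
Variable C : numClosedFieldType.
Local Notation pZtoC := (map_poly (intr : int -> C)).
Local Notation pZtoQ := (map_poly (intr : int -> rat)).

Lemma pZtoC_Xn_sub1 n : pZtoC ('X^n - 1) = 'X^n - 1.
Proof. by rewrite rmorphB /= rmorph1 map_polyXn. Qed.

Lemma prim_root_exists M : (0 < M)%N -> exists w : C, M.-primitive_root w.
Proof.
move=> M_gt0; have [rs Drs] := closed_field_poly_normal ('X^M - 1 : {poly C}).
rewrite (monicP (monicXnsubC 1 M_gt0)) scale1r in Drs.
have unity_rs : all M.-unity_root rs.
  by apply/allP=> z; rewrite -root_prod_XsubC -Drs.
have size_rs : (M < (size rs).+1)%N.
  by rewrite -(size_prod_XsubC rs id) -Drs size_XnsubC.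
have [|w] := hasP (cyclic.has_prim_root M_gt0 unity_rs _ size_rs); last by exists w.
by rewrite -separable_prod_XsubC -Drs separable_Xn_sub_1 // pnatr_eq0 -lt0n.
Qed.

Lemma Cyclotomic_root_unity M (z : C) : (0 < M)%N ->
  root (pZtoC 'Phi_M) z -> z ^+ M = 1.
Proof.
move=> M_gt0 Phi_z; have [q Dq] := Cyclotomic_dvd_Xn_sub1 M_gt0.
have : root (pZtoC ('X^M - 1)) z by rewrite Dq rmorphM rootM Phi_z.
by rewrite pZtoC_Xn_sub1 /root !hornerE subr_eq0 => /eqP.
Qed.

Lemma Cyclotomic_prim_root M (w : C) : M.-primitive_root w ->
  root (pZtoC 'Phi_M) w.
Proof.
move=> prim_w; have M_gt0 := prim_order_gt0 prim_w.
have : root (pZtoC ('X^M - 1)) w.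
  by rewrite pZtoC_Xn_sub1 /root !hornerE prim_expr_order // subrr.
rewrite -(prod_Cyclotomic M_gt0) rmorph_prod /root horner_prod.
rewrite prodf_seq_eq0 => /hasP[d]; rewrite -dvdn_divisors // => dvd_dM /= Phi_d.
have [eq_dM | neq_dM] := eqVneq d M; first by rewrite -eq_dM.
have d_gt0 := dvdn_gt0 M_gt0 dvd_dM.
have dvd_Md : (M %| d)%N.
  by rewrite (prim_order_dvd prim_w) (Cyclotomic_root_unity d_gt0 Phi_d).
by case/negP: neq_dM; rewrite eqn_leq (dvdn_leq M_gt0 dvd_dM) (dvdn_leq d_gt0 dvd_Md).
Qed.

(* Phi_M is irreducible over Q: in algC it is the minimal polynomial of a primitive root. *)
Lemma Cyclotomic_dvd_of_root M (w : C) (Q : {poly int}) :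
  M.-primitive_root w -> root (pZtoC Q) w -> (pZtoQ 'Phi_M %| pZtoQ Q)%R.
Proof.
move=> prim_w Q_w; set g := gcdp (pZtoQ Q) (pZtoQ 'Phi_M).
have g_w : root (map_poly ratr g) w.
  by rewrite gcdp_map root_gcd !map_poly_ratr_int Q_w Cyclotomic_prim_root.
have size_g : (1 < size g)%N.
  rewrite -(size_map_poly (ratr : {rmorphism rat -> C})).
  apply: root_size_gt1 g_w; rewrite map_poly_eq0 gcdp_eq0 negb_and orbC.
  by rewrite monic_neq0 // monic_map // Cyclotomic_monic.
have [r] : exists r : algC, root (map_poly ratr g) r.
  by apply/closed_rootP; rewrite size_map_poly; case: (size g) size_g => [|[]].
rewrite gcdp_map root_gcd !map_poly_ratr_int => /andP[Q_r Phi_r].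
have [z prim_z] := C_prim_root_exists (prim_order_gt0 prim_w).
have prim_r : M.-primitive_root r.
  by rewrite -(root_cyclotomic prim_z) -(Cintr_Cyclotomic prim_z); exact: Phi_r.
have [p [Dp _] dvd_p] := minCpolyP r.
suff Dp' : pZtoQ 'Phi_M = p by rewrite Dp' -dvd_p map_poly_ratr_int; exact: Q_r.
apply: (map_poly_inj (ratr : {rmorphism rat -> algC})).
by rewrite -Dp map_poly_ratr_int (Cintr_Cyclotomic prim_r) (minCpoly_cyclotomic prim_r).
Qed.

Lemma Cyclotomic_root_conjugate M (w z : C) (Q : {poly int}) :
  M.-primitive_root w -> root (pZtoC Q) w ->
  root (pZtoC 'Phi_M) z -> root (pZtoC Q) z.
Proof.
move=> prim_w Q_w Phi_z; have /dvdpP[h DQ] := Cyclotomic_dvd_of_root prim_w Q_w.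
rewrite -map_poly_ratr_int DQ rmorphM rootM /= map_poly_ratr_int.
by apply/orP; right; exact: Phi_z.
Qed.

Lemma conj_horner_int (P : {poly int}) (z : C) :
  ((pZtoC P).[z])^* = (pZtoC P).[z^*].
Proof.
rewrite -horner_map /= -map_poly_comp; congr (_.[_]).
by apply: eq_map_poly => a /=; rewrite (rmorph_int (Num.conj : {rmorphism C -> C})).
Qed.

(* On a root z of Phi_M we have z^* = z^-1 = z^(M-1), so |P(z)|^2 - 1 is the value at z
   of the integer polynomial P(X) P(X^(M-1)) - 1, which vanishes on all roots of Phi_M once it
   vanishes at w. *)
Lemma Cyclotomic_conjugates_norm1 M (w : C) (P : {poly int}) :
  M.-primitive_root w -> `|(pZtoC P).[w]| = 1 ->
  forall z, root (pZtoC 'Phi_M) z -> `|(pZtoC P).[z]| = 1.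
Proof.
move=> prim_w P_w1; have M_gt0 := prim_order_gt0 prim_w.
pose F := P * (P \Po 'X^(M.-1)) - 1.
have F_val z : root (pZtoC 'Phi_M) z -> (pZtoC F).[z] = `|(pZtoC P).[z]| ^+ 2 - 1.
  move=> Phi_z; have zM := Cyclotomic_root_unity M_gt0 Phi_z.
  have z_norm1 : `|z| = 1.
    by apply/eqP; rewrite -(pexpr_eq1 M_gt0) // -normrX zM normr1.
  have z_neq0 : z != 0 by rewrite -normr_eq0 z_norm1 oner_neq0.
  have conj_z : z^* = z ^+ M.-1.
    apply: (mulfI z_neq0); rewrite -normCK z_norm1 expr1n -exprS prednK // zM.
  rewrite normCK conj_horner_int conj_z rmorphB rmorphM /= rmorph1.
  by rewrite map_comp_poly /= map_polyXn !hornerE horner_comp hornerXn.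
have F_w : root (pZtoC F) w.
  by rewrite /root F_val ?Cyclotomic_prim_root // P_w1 expr1n subrr.
move=> z Phi_z; have := Cyclotomic_root_conjugate prim_w F_w Phi_z.
by rewrite /root F_val // subr_eq0 sqrp_eq1 // => /eqP.
Qed.

Lemma Cyclotomic_factor M : (0 < M)%N ->
  exists2 rs : seq C, uniq rs & pZtoC 'Phi_M = \prod_(z <- rs) ('X - z%:P).
Proof.
move=> M_gt0; have [rs Drs] := closed_field_poly_normal (pZtoC 'Phi_M).
rewrite (monicP (monic_map _ (Cyclotomic_monic M))) scale1r in Drs.
exists rs => //; rewrite -separable_prod_XsubC -Drs.
have [q Dq] := Cyclotomic_dvd_Xn_sub1 M_gt0.
apply: (@dvdp_separable _ ('X^M - 1)); last first.
  by apply: separable_Xn_sub_1; rewrite pnatr_eq0 -lt0n.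
by rewrite -pZtoC_Xn_sub1 Dq rmorphM dvdp_mulIl.
Qed.

End Cyclotomic.

(* The coefficients are recovered from the values at the nodes by the inverse Vandermonde
   matrix. *)
Lemma interpolation_coef_bound (F : numFieldType) (rs : seq F) : uniq rs ->
  exists B : F, forall p : {poly F}, (size p <= size rs)%N ->
    {in rs, forall z, `|p.[z]| <= 1} -> forall i, `|p`_i| <= B.
Proof.
move=> uniq_rs; set d := size rs.
pose V := Vandermonde d (\row_(j < d) rs`_j); pose W := invmx V.
have unit_V : V \in unitmx.
  rewrite unitmxE unitfE det_Vandermonde; apply/prodf_neq0 => i _.
  apply/prodf_neq0 => j lt_ij; rewrite !mxE subr_eq0.
  by rewrite (nth_uniq 0 (ltn_ord j) (ltn_ord i) uniq_rs) gtn_eqF.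
pose B := \sum_(i < d) \sum_(j < d) `|W j i|.
have B_ge0 : 0 <= B by apply: sumr_ge0 => i _; apply: sumr_ge0.
exists B => p size_p p_rs i.
have [lt_id | ge_id] := ltnP i d; last by rewrite nth_default ?normr0 // (leq_trans size_p).
pose c : 'rV_d := \row_(k < d) p`_k.
have cV : c *m V = \row_(j < d) p.[rs`_j].
  apply/rowP => j; rewrite !mxE (horner_coef_wide _ size_p).
  by apply: eq_bigr => k _; rewrite !mxE.
have -> : p`_i = (c *m V *m W) 0 (Ordinal lt_id) by rewrite mulmxK // mxE.
rewrite cV mxE; apply: le_trans (ler_norm_sum _ _ _) _.
apply: (@le_trans _ _ (\sum_(j < d) `|W j (Ordinal lt_id)|)).
  apply: ler_sum => j _; rewrite mxE normrM ler_piMl //.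
  by apply: p_rs; rewrite mem_nth.
rewrite /B [leRHS](bigD1 (Ordinal lt_id)) //= lerDl.
by apply: sumr_ge0 => k _; apply: sumr_ge0.
Qed.

Lemma complex_int_norm_bound (R : realType) (B : R[i]) :
  exists N : nat, forall z : int, `|z%:~R : R[i]| <= B -> (`|z| <= N%:Z)%R.
Proof.
exists (Num.Def.archi_bound (complex.Re B)) => z.
rewrite -intr_norm lecE => /andP[_]; rewrite raddfMz /= => le_zB.
have ReB_ge0 : 0 <= complex.Re B by rewrite (le_trans _ le_zB) // ler0z.
rewrite -(ler_int R) -[(_ : int)%:~R]/(_%:R).
exact: ltW (le_lt_trans le_zB (archi_boundP ReB_ge0)).
Qed.

Lemma bounded_int_polys_collision (d N : nat) (Q : nat -> {poly int}) :
  (forall m, size (Q m) <= d)%N -> (forall m i, `|(Q m)`_i| <= N%:Z) ->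
  exists m1 m2, (m1 < m2)%N /\ Q m1 = Q m2.
Proof.
move=> size_Q Q_bound.
pose code m : {ffun 'I_d -> 'I_(2 * N).+1} :=
  [ffun i : 'I_d => inord (absz ((Q m)`_i + N%:Z))].
have [m1 [m2 [lt_m12 eq_code]]] := fin_image_collision code.
exists m1, m2; split => //; apply/polyP => i.
have [lt_id | ge_id] := ltnP i d; last first.
  by rewrite !nth_default // (leq_trans (size_Q _) ge_id).
have shift m : (0 <= (Q m)`_i + N%:Z) /\ (absz ((Q m)`_i + N%:Z)%R < (2 * N).+1)%N.
  by move: (Q_bound m i); rewrite ler_norml => /andP[? ?]; split; lia.
have [[Q1_ge0 Q1_lt] [Q2_ge0 Q2_lt]] := (shift m1, shift m2).
move: (congr1 (fun f : {ffun _ -> _} => val (f (Ordinal lt_id))) eq_code).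
rewrite !ffunE /= !inordK //.
by move/(congr1 Posz); rewrite !gez0_abs // => /addIr.
Qed.

Section Kronecker.
Variable R : realType.
Local Notation C := R[i].
Local Notation pZtoC := (map_poly (intr : int -> C)).

Lemma Kronecker_unity_root M (w : C) (P : {poly int}) : M.-primitive_root w ->
  `|(pZtoC P).[w]| = 1 -> exists m, (0 < m)%N /\ (pZtoC P).[w] ^+ m = 1.
Proof.
move=> prim_w P_w1; have M_gt0 := prim_order_gt0 prim_w.
have Phi_monic := Cyclotomic_monic M.
have [rs uniq_rs Drs] := Cyclotomic_factor C M_gt0.
have [B B_bound] := interpolation_coef_bound uniq_rs.
have [N N_bound] := complex_int_norm_bound B.
pose Q m := Pdiv.Ring.rmodp (P ^+ m) 'Phi_M.
have Q_val m z : root (pZtoC 'Phi_M) z -> (pZtoC (Q m)).[z] = (pZtoC P).[z] ^+ m.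
  move=> Phi_z; move: (Pdiv.RingMonic.rdivp_eq Phi_monic (P ^+ m)).
  move/(congr1 (fun p => (pZtoC p).[z])); rewrite rmorphD rmorphM rmorphXn.
  by rewrite hornerD hornerM (rootP Phi_z) mulr0 add0r horner_exp => ->.
have size_Q m : (size (Q m) <= size rs)%N.
  have size_Phi : size 'Phi_M = (size rs).+1.
    by rewrite -(size_map_inj_poly (@intr_inj C)) // Drs size_prod_XsubC.
  by rewrite -ltnS -size_Phi Pdiv.Ring.ltn_rmodpN0 // monic_neq0.
have Q_bound m i : `|(Q m)`_i| <= N%:Z.
  apply: N_bound; rewrite -coef_map; apply: B_bound.
    by rewrite size_map_inj_poly ?size_Q //; apply: intr_inj.
  move=> z rs_z; have Phi_z : root (pZtoC 'Phi_M) z by rewrite Drs root_prod_XsubC.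
  by rewrite Q_val // normrX (Cyclotomic_conjugates_norm1 prim_w P_w1 Phi_z) expr1n.
have [m1 [m2 [lt_m12 eq_Q]]] := bounded_int_polys_collision size_Q Q_bound.
have Phi_w := Cyclotomic_prim_root prim_w.
have P_w_neq0 : (pZtoC P).[w] != 0 by rewrite -normr_eq0 P_w1 oner_neq0.
exists (m2 - m1)%N; split; first by rewrite subn_gt0.
by rewrite expfB // -!Q_val // eq_Q divff // Q_val // expf_neq0.
Qed.

End Kronecker.

Definition int_poly_value (C : nzRingType) (w y : C) :=
  exists P : {poly int}, y = (map_poly intr P).[w].

Section IntPolyValue.
Variables (C : comNzRingType) (w : C).

Lemma int_poly_value0 : int_poly_value w 0.
Proof. by exists 0; rewrite rmorph0 horner0. Qed.

Lemma int_poly_valueD x y :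
  int_poly_value w x -> int_poly_value w y -> int_poly_value w (x + y).
Proof. by move=> [P ->] [Q ->]; exists (P + Q); rewrite rmorphD hornerD. Qed.

Lemma int_poly_valueM x y :
  int_poly_value w x -> int_poly_value w y -> int_poly_value w (x * y).
Proof. by move=> [P ->] [Q ->]; exists (P * Q); rewrite rmorphM hornerM. Qed.

Lemma int_poly_valueX k : int_poly_value w (w ^+ k).
Proof. by exists 'X^k; rewrite map_polyXn hornerXn. Qed.

Lemma int_poly_value1 : int_poly_value w 1.
Proof. by rewrite -(expr0 w); apply: int_poly_valueX. Qed.

End IntPolyValue.

Lemma int_poly_value_unity (C : fieldType) M (w z : C) :
  M.-primitive_root w -> z ^+ M = 1 -> int_poly_value w z.
Proof. by move=> prim_w /(prim_rootP prim_w)[k ->]; apply: int_poly_valueX. Qed.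

Lemma int_poly_value_unity_root (R : realType) M (w y : R[i]) :
  M.-primitive_root w -> int_poly_value w y -> `|y| = 1 -> is_root_of_unity y.
Proof. by move=> prim_w [P ->] /(Kronecker_unity_root prim_w). Qed.

Lemma trace_int_poly_value (C : closedFieldType) m (X : 'M[C]_m.+1) n M (w : C) :
  X ^+ n = 1 -> M.-primitive_root w -> (n %| M)%N -> int_poly_value w (\tr X).
Proof.
move=> Xn prim_w dvd_nM; have [rs rs_unity ->] := trace_unity_roots Xn.
rewrite big_seq; apply: big_ind => [|x y|z rs_z]; first exact: int_poly_value0.
  exact: int_poly_valueD.
apply: int_poly_value_unity prim_w _.
by rewrite -(divnK dvd_nM) mulnC exprM rs_unity ?expr1n.
Qed.

(* With e a primitive 5th root of unity, the Gauss periods A = e + e^4 and B = e^2 + e^3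
   satisfy (2A + 1)^2 = 5 and 2B + 1 = -(2A + 1). *)
Lemma sqrt5_int_poly_value (C : fieldType) M (w r : C) :
  M.-primitive_root w -> (5 %| M)%N -> r ^+ 2 = 5 ->
  exists2 u, int_poly_value w u & u *+ 2 + 1 = r.
Proof.
move=> prim_w dvd_5M r2.
set e := w ^+ (M %/ 5); have prim_e : 5.-primitive_root e := dvdn_prim_root prim_w dvd_5M.
have e5 : e ^+ 5 = 1 := prim_expr_order prim_e.
have Z_e k : int_poly_value w (e ^+ k) by rewrite -exprM; apply: int_poly_valueX.
have sum_e : 1 + e + e ^+ 2 + e ^+ 3 + e ^+ 4 = 0.
  have e_neq1 : e != 1 by rewrite -[e]expr1 -(prim_order_dvd prim_e).
  have : (e - 1) * (1 + e + e ^+ 2 + e ^+ 3 + e ^+ 4) = e ^+ 5 - 1 by ring.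
  by rewrite e5 subrr => /eqP; rewrite mulf_eq0 subr_eq0 (negbTE e_neq1) => /eqP.
set A := e + e ^+ 4; set B := e ^+ 2 + e ^+ 3.
have A2 : (A *+ 2 + 1) ^+ 2 = 5.
  have -> : (A *+ 2 + 1) ^+ 2 =
      5 + 4 * (1 + e + e ^+ 2 + e ^+ 3 + e ^+ 4) + (8 + 4 * e ^+ 3) * (e ^+ 5 - 1).
    by rewrite /A; ring.
  by rewrite sum_e e5 subrr !mulr0 !addr0.
have DB : B *+ 2 + 1 = (1 + e + e ^+ 2 + e ^+ 3 + e ^+ 4) *+ 2 - (A *+ 2 + 1).
  by rewrite /A /B; ring.
have : (A *+ 2 + 1 - r) * (A *+ 2 + 1 + r) = 0 by rewrite -subr_sqr A2 r2 subrr.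
move/eqP; rewrite mulf_eq0 subr_eq0 addr_eq0 => /orP[/eqP DA | /eqP DA].
  by exists A => //; apply: int_poly_valueD; rewrite -[e]expr1; apply: Z_e.
by exists B; [apply: int_poly_valueD; apply: Z_e | rewrite DB sum_e mul0rn sub0r DA opprK].
Qed.

Section SignMatrix.
Variables (R : pzRingType) (n : nat).

Definition sign_mx (k : 'I_n) : 'M[R]_n := delta_mx k k *+ 2 - 1%:M.

Lemma trace_mul_delta (A : 'M[R]_n) k : \tr (A *m delta_mx k k) = A k k.
Proof.
rewrite /mxtrace (bigD1 k) //= big1 ?addr0 => [|i neq_ik]; rewrite mxE.
  rewrite (bigD1 k) //= big1 ?addr0 => [|j neq_jk]; rewrite mxE ?eqxx ?mulr1 //.
  by rewrite (negbTE neq_jk) mulr0.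
by rewrite big1 // => j _; rewrite mxE (negbTE neq_ik) andbF mulr0.
Qed.

Lemma sign_mxE k :
  sign_mx k = \matrix_(i, j) (if i == j then (if i == k then 1 else -1) else 0).
Proof.
apply/matrixP => i j; rewrite !mxE.
have [<- | neq_ij] := eqVneq i j; case: (i =P k) => [eq_ik | _] /=.
- by rewrite addrK.
- by rewrite add0r sub0r.
- by rewrite -eq_ik eq_sym (negbTE neq_ij) addr0 subr0.
- by rewrite add0r subr0.
Qed.

Lemma mul_delta_entry (A B : 'M[R]_n) i j l :
  (A *m delta_mx l l *m B) i j = A i l * B l j.
Proof.
rewrite mxE (bigD1 l) //= big1 ?addr0 => [|m neq_ml]; rewrite mxE.
  rewrite (bigD1 l) //= big1 ?addr0 => [|m neq_ml]; rewrite mxE ?eqxx ?mulr1 //.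
  by rewrite (negbTE neq_ml) mulr0.
by rewrite big1 ?mul0r // => m' _; rewrite mxE (negbTE neq_ml) andbF mulr0.
Qed.

Lemma mulmx_sign_mx_add1 (A : 'M[R]_n) k :
  A *m (1%:M + sign_mx k) = (A *m delta_mx k k) *+ 2.
Proof. by rewrite addrC subrK raddfMn. Qed.

Lemma diag_entry_trace (A : 'M[R]_n) k :
  A k k *+ 2 = \tr A + \tr (A *m sign_mx k).
Proof.
rewrite -mxtraceD -[X in \tr (X + _)]mulmx1 -mulmxDr mulmx_sign_mx_add1.
by rewrite raddfMn /= trace_mul_delta.
Qed.

Lemma offdiag_product_trace (A : 'M[R]_n) k l :
  (A k l * A l k) *+ 4 = \tr (A *m A) + \tr (A *m A *m sign_mx k)
    + \tr (A *m sign_mx l *m A) + \tr (A *m sign_mx l *m A *m sign_mx k).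
Proof.
have -> : \tr (A *m A) + \tr (A *m A *m sign_mx k) + \tr (A *m sign_mx l *m A)
    + \tr (A *m sign_mx l *m A *m sign_mx k)
    = \tr (A *m (1%:M + sign_mx l) *m A *m (1%:M + sign_mx k)).
  rewrite -!mxtraceD (mulmxDr A) mulmxDl mulmxDr !mulmx1 mulmxDl.
  by rewrite addrACA !addrA.
rewrite !mulmx_sign_mx_add1 !mulmxE !mulrnAl -!mulmxE !raddfMn /=.
by rewrite trace_mul_delta mul_delta_entry -mulrnA.
Qed.

End SignMatrix.

Arguments sign_mx {R n} k.

Lemma sign_mx_in (R : realType) (G : seq 'M[R[i]]_3) :
  S1 R \in G -> S2 R \in G -> S3 R \in G -> forall k, sign_mx k \in G.
Proof.
move=> S1G S2G S3G k.
suff [-> | [-> | ->]] : k = 0 \/ k = 1 \/ k = 2 by rewrite sign_mxE.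
by case: k => [[|[|[|//]]] ?]; [left | right; left | right; right]; apply: val_inj.
Qed.

Section AdmissibleModuli.
Variable R : realType.
Local Notation r := ((Num.sqrt (5 : R))%:C%C : R[i]).

Lemma sqrt5C_sqr : r ^+ 2 = 5.
Proof. by rewrite -rmorphXn /= sqr_sqrtr ?ler0n // rmorph_nat. Qed.

Lemma sqrt5C_gt1 : 1 < r.
Proof.
by rewrite -(rmorph1 (real_complex R)) ltcR -[X in X < _]sqrtr1 ltr_sqrt ?ltr0n ?ltr1n.
Qed.

Lemma admissible_c_gt0 (c : R[i]) : admissible_c c -> 0 < c.
Proof.
have r_gt0 : 0 < r := lt_trans ltr01 sqrt5C_gt1.
case=> [-> | [-> | ->]]; first by rewrite invr_gt0 ltr0n.
  by rewrite divr_gt0 ?ltr0n ?addr_gt0.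
by rewrite divr_gt0 ?ltr0n ?subr_gt0 ?sqrt5C_gt1.
Qed.

Lemma admissible_c_inv (c : R[i]) M (w : R[i]) :
  admissible_c c -> M.-primitive_root w -> (5 %| M)%N ->
  exists2 x, int_poly_value w x & c^-1 = x *+ 2.
Proof.
move=> adm prim_w dvd_5M; have c_neq0 := lt0r_neq0 (admissible_c_gt0 adm).
suff [x Zx cx] : exists2 x, int_poly_value w x & c * x *+ 2 = 1.
  by exists x => //; rewrite -[c^-1]mulr1 -cx -mulrnAr mulKf.
have [u Zu Du] := sqrt5_int_poly_value prim_w dvd_5M sqrt5C_sqr.
have sqr_sub1 : (r ^+ 2 - 1) / 4 = 1.
  rewrite sqrt5C_sqr (_ : 5 - 1 = 4) ?divff ?pnatr_eq0 //; ring.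
case: adm => [-> | [-> | ->]].
- exists 1; first exact: int_poly_value1.
  by rewrite mulr1 -mulr_natr mulVf ?pnatr_eq0.
- by exists u => //; rewrite -mulrnAr -[RHS]sqr_sub1 -Du; ring.
- exists (u + 1); last by rewrite -mulrnAr -[RHS]sqr_sub1 -Du; ring.
  by apply: int_poly_valueD => //; apply: int_poly_value1.
Qed.

End AdmissibleModuli.

Theorem theorem3 (R : realType) (G : seq 'M[R[i]]_3) (T : 'M[R[i]]_3)
    (c : R[i]) :
  finite_unitary_group G ->
  S1 R \in G -> S2 R \in G -> S3 R \in G -> T \in G ->
  admissible_c c ->
  (forall j : 'I_3, `|T j j| = c ->
     exists xi : R[i], is_root_of_unity xi /\ T j j = c * xi) /\
  (forall k l : 'I_3, k != l -> `|T k l * T l k| = 4^-1 ->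
     exists xi : R[i], is_root_of_unity xi /\ T k l * T l k = xi / 4).
Proof.
move=> fG S1G S2G S3G TG adm.
have [n [n_gt0 expG]] := finite_unitary_group_exponent fG.
have [w prim_w] : exists w : R[i], (5 * n).-primitive_root w.
  by apply: prim_root_exists; rewrite muln_gt0 n_gt0.
have trG X : X \in G -> int_poly_value w (\tr X).
  by move=> XG; apply: trace_int_poly_value (expG X XG) prim_w (dvdn_mull 5 (dvdnn n)).
have mulG := finite_unitary_group_mul fG.
have signG := sign_mx_in S1G S2G S3G.
have root_unity := int_poly_value_unity_root prim_w.
split=> [j Tjj_c | k l _ TTkl].
  have [x Zx c_inv] := admissible_c_inv adm prim_w (dvdn_mulr n (dvdnn 5)).
  have Z2T : int_poly_value w (T j j *+ 2).
    by rewrite diag_entry_trace; apply: int_poly_valueD; apply: trG; rewrite ?mulG ?signG.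
  have c_gt0 := admissible_c_gt0 adm.
  exists (T j j / c); split; last by rewrite mulrCA mulfV ?mulr1 ?lt0r_neq0.
  apply: root_unity; first by rewrite c_inv mulrnAr -mulrnAl; apply: int_poly_valueM.
  by rewrite normrM Tjj_c normfV gtr0_norm // mulfV ?lt0r_neq0.
have Z4TT : int_poly_value w ((T k l * T l k) *+ 4).
  rewrite offdiag_product_trace.
  by do ?apply: int_poly_valueD; apply: trG; rewrite ?mulG ?signG.
exists (T k l * T l k *+ 4); split.
  by apply: root_unity Z4TT _; rewrite -mulr_natr normrM TTkl normr_nat mulVf ?pnatr_eq0.
by rewrite -mulr_natr mulfK ?pnatr_eq0.
Qed.
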